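(* Let $n,m\ge 1$, let $A_1,\ldots,A_m$ be real symmetric $n\times n$ matrices and $a_1,\ldots,a_m\in\mathbb{R}^n$, and define $f:\mathbb{R}^n\to\mathbb{R}^m$ by $f(x)=(f_1(x),\ldots,f_m(x))$ with $f_i(x)=\frac12 x^TA_ix+a_i^Tx$. Let $A=[a_1~\ldots~a_m]\in\mathbb{R}^{n\times m}$, let $$L_{\rm new}:=\sqrt{\lambda_{\max}\Big(\sum_{i=1}^mA_i^TA_i\Big)},\qquad \nu:=\sigma_{\min}(A)=\sqrt{\lambda_{\min}(A^TA)},$$ assume $L_{\rm new}>0$, and set $\epsilon^*_{\rm new}:=\nu/(2L_{\rm new})$. Then for every $\epsilon$ with $0<\epsilon<\epsilon^*_{\rm new}$ and every $a\in\mathbb{R}^n$ with $\|a\|<2(\epsilon^*_{\rm new}-\epsilon)$, the set $$F_m(\epsilon,a)=\{f(x):~x\in\mathbb{R}^n,~\|x-a\|\le\epsilon\}$$ is a convex subset of $\mathbb{R}^m$.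
   Context: $\|\cdot\|$ on vectors is the Euclidean norm. $\lambda_{\max},\lambda_{\min}$ denote the largest and smallest eigenvalue of a symmetric matrix, and $\sigma_{\min}(A)$ denotes the smallest singular value of $A$, defined as $\sqrt{\lambda_{\min}(A^TA)}$. *)

From HB Require Import structures.
From mathcomp Require Import all_boot all_order all_algebra.
From mathcomp Require Import all_classical all_reals all_analysis.
Set Implicit Arguments. Unset Strict Implicit. Unset Printing Implicit Defensive.
Import Order.TTheory GRing.Theory Num.Theory.
Local Open Scope classical_set_scope.
Local Open Scope ring_scope.

Definition vnorm (R : realType) (n : nat) (x : 'cV[R]_n) : R :=
  Num.sqrt (\sum_(k < n) (x k 0) ^+ 2).

Definition lambda_max (R : realType) (n : nat) (S : 'M[R]_n) : R :=
  sup [set a : R | eigenvalue S a].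
Definition lambda_min (R : realType) (n : nat) (S : 'M[R]_n) : R :=
  inf [set a : R | eigenvalue S a].

Definition sigma_min (R : realType) (n m : nat) (A : 'M[R]_(n, m)) : R :=
  Num.sqrt (lambda_min (A^T *m A)).

Definition quadmap (R : realType) (n m : nat)
    (Ai : 'I_m -> 'M[R]_n) (ai : 'I_m -> 'cV[R]_n) (x : 'cV[R]_n) : 'cV[R]_m :=
  \col_(i < m) ((2%:R)^-1 * (x^T *m Ai i *m x) 0 0 + ((ai i)^T *m x) 0 0).

Definition Fm (R : realType) (n m : nat)
    (Ai : 'I_m -> 'M[R]_n) (ai : 'I_m -> 'cV[R]_n) (eps : R) (a : 'cV[R]_n)
    : set 'cV[R]_m :=
  [set quadmap Ai ai x | x in [set x | vnorm (x - a) <= eps]].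

Definition colmat (R : realType) (n m : nat) (ai : 'I_m -> 'cV[R]_n) : 'M[R]_(n, m) :=
  \matrix_(j < n, i < m) ai i j 0.

(* Let y = t f(x1) + (1 - t) f(x2) with x1, x2 in the ball B(a, eps) and put
   x0 = t x1 + (1 - t) x2.  Since f is quadratic, f(x0) - y = -t(1-t) Q(x1 - x2)
   exactly, so |f(x0) - y| <= L U / 2 with U = t(1-t)|x1 - x2|^2, while
   |x0 - a|^2 <= eps^2 - U.  Minimize the penalized residual
   |f(x) - y| + L eps |x - x0| over the closed eps-ball around x0.  Comparing
   with x0 keeps the minimizer xs within U / (2 eps) of x0, hence inside
   B(a, eps).  There the transposed Jacobian is bounded below by
   nu - L |xs| > L eps (nu from the linear part, L from the quadratic part), so
   f'(xs) d = y - f(xs) has a solution with L eps |d| < |f(xs) - y| unless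
   f(xs) = y, and a short step along d would decrease the penalty. *)

From HB Require Import structures.
From mathcomp Require Import all_boot all_order all_algebra.
From mathcomp Require Import all_classical all_reals all_analysis.
From mathcomp Require Import ring lra.
Import Order.TTheory GRing.Theory Num.Theory.
Import numFieldNormedType.Exports.
Local Open Scope classical_set_scope.
Local Open Scope ring_scope.
Set Implicit Arguments. Unset Strict Implicit. Unset Printing Implicit Defensive.

Lemma le_of_sqr_le (R : realDomainType) (a b : R) :
  0 <= b -> a ^+ 2 <= b ^+ 2 -> a <= b.
Proof. move=> b0 ab; rewrite leNgt; apply/negP => ba; nra. Qed.

Lemma le_of_sqr_le_mul (R : realDomainType) (b c : R) :
  0 <= b -> 0 <= c -> b ^+ 2 <= b * c -> b <= c.
Proof. move=> b0 c0 bc; rewrite leNgt; apply/negP => cb; nra. Qed.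

(** * Euclidean inner product *)

Section DotProduct.
Variable R : realFieldType.

Definition dotv (k : nat) (x y : 'cV[R]_k) : R := \sum_(j < k) x j 0 * y j 0.

Lemma dotvE (k : nat) (x y : 'cV[R]_k) : dotv x y = (x^T *m y) 0 0.
Proof. by rewrite /dotv mxE; apply: eq_bigr => j _; rewrite mxE. Qed.

Variable k : nat.
Implicit Types x y z : 'cV[R]_k.

Lemma dotvC x y : dotv x y = dotv y x.
Proof. by apply: eq_bigr => j _; rewrite mulrC. Qed.

Lemma dotvDl x y z : dotv (x + y) z = dotv x z + dotv y z.
Proof. by rewrite /dotv -big_split; apply: eq_bigr => j _; rewrite !mxE mulrDl. Qed.

Lemma dotvDr x y z : dotv z (x + y) = dotv z x + dotv z y.
Proof. by rewrite dotvC dotvDl !(dotvC z). Qed.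

Lemma dotvZl (c : R) x y : dotv (c *: x) y = c * dotv x y.
Proof. by rewrite /dotv mulr_sumr; apply: eq_bigr => j _; rewrite !mxE mulrA. Qed.

Lemma dotvZr (c : R) x y : dotv y (c *: x) = c * dotv y x.
Proof. by rewrite dotvC dotvZl dotvC. Qed.

Lemma dotvNl x y : dotv (- x) y = - dotv x y.
Proof. by rewrite -scaleN1r dotvZl mulN1r. Qed.

Lemma dotvNr x y : dotv y (- x) = - dotv y x.
Proof. by rewrite dotvC dotvNl dotvC. Qed.

Lemma dotvBl x y z : dotv (x - y) z = dotv x z - dotv y z.
Proof. by rewrite dotvDl dotvNl. Qed.

Lemma dotvBr x y z : dotv z (x - y) = dotv z x - dotv z y.
Proof. by rewrite dotvDr dotvNr. Qed.

Lemma dotv0l y : dotv 0 y = 0.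
Proof. by rewrite -(scale0r (0 : 'cV[R]_k)) dotvZl mul0r. Qed.

Lemma dotv0r y : dotv y 0 = 0.
Proof. by rewrite dotvC dotv0l. Qed.

Lemma dotv_suml (l : nat) (F : 'I_l -> 'cV[R]_k) x :
  dotv x (\sum_i F i) = \sum_i dotv x (F i).
Proof.
rewrite /dotv exchange_big /=; apply: eq_bigr => j _.
by rewrite summxE mulr_sumr.
Qed.

Lemma dotv_ge0 x : 0 <= dotv x x.
Proof. by apply: sumr_ge0 => j _; rewrite -expr2 sqr_ge0. Qed.

Lemma dotv_eq0 x : (dotv x x == 0) = (x == 0).
Proof.
apply/idP/idP => [|/eqP ->]; last by rewrite dotv0l.
rewrite psumr_eq0 => [/allP x0|j _]; last by rewrite -expr2 sqr_ge0.
apply/eqP/matrixP => j l; rewrite (ord1 l) mxE.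
by have := x0 j (mem_index_enum _); rewrite mulf_eq0 orbb => /eqP.
Qed.

Lemma dotv_gt0 x : (0 < dotv x x) = (x != 0).
Proof. by rewrite lt_neqAle dotv_ge0 andbT eq_sym dotv_eq0. Qed.

Lemma sqr_coord_le_dotv x j : x j 0 ^+ 2 <= dotv x x.
Proof.
rewrite /dotv (bigD1 j) //= expr2 lerDl.
by apply: sumr_ge0 => i _; rewrite -expr2 sqr_ge0.
Qed.

Lemma dotv_lincomb (a b : R) x y :
  dotv (a *: x + b *: y) (a *: x + b *: y) =
  a ^+ 2 * dotv x x + 2 * a * b * dotv x y + b ^+ 2 * dotv y y.
Proof. rewrite !dotvDl !dotvDr !dotvZl !dotvZr (dotvC y x); ring. Qed.

Lemma dotv_convex_comb (t : R) x y :
  dotv (t *: x + (1 - t) *: y) (t *: x + (1 - t) *: y) =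
  t * dotv x x + (1 - t) * dotv y y - t * (1 - t) * dotv (x - y) (x - y).
Proof. rewrite dotv_lincomb !dotvBl !dotvBr (dotvC y x); ring. Qed.

Lemma dotv_Cauchy_Schwarz x y : dotv x y ^+ 2 <= dotv x x * dotv y y.
Proof.
have [->|x0] := eqVneq x 0; first by rewrite !dotv0l expr0n mul0r.
have xx0 : 0 < dotv x x by rewrite dotv_gt0.
have := dotv_ge0 (dotv x x *: y + (- dotv x y) *: x).
rewrite dotv_lincomb (dotvC y x).
have -> : dotv x x ^+ 2 * dotv y y + 2 * dotv x x * - dotv x y * dotv x y +
  (- dotv x y) ^+ 2 * dotv x x = dotv x x * (dotv x x * dotv y y - dotv x y ^+ 2)
  by ring.
by rewrite pmulr_rge0 // subr_ge0.
Qed.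

Lemma dotv_mulmx (l : nat) (B : 'M[R]_(k, l)) x (y : 'cV[R]_l) :
  dotv x (B *m y) = dotv (B^T *m x) y.
Proof. by rewrite !dotvE trmx_mul trmxK !mulmxA. Qed.

Lemma dotv_mulmx_sym (B : 'M[R]_k) x y :
  B^T = B -> dotv x (B *m y) = dotv y (B *m x).
Proof. by move=> Bsym; rewrite dotv_mulmx Bsym dotvC. Qed.

End DotProduct.

Section EuclideanNorm.
Variables (R : realType) (k : nat).
Implicit Types x y : 'cV[R]_k.

Lemma vnormE x : vnorm x = Num.sqrt (dotv x x).
Proof. by congr Num.sqrt; apply: eq_bigr => j _; rewrite expr2. Qed.

Lemma vnorm_ge0 x : 0 <= vnorm x.
Proof. by rewrite vnormE sqrtr_ge0. Qed.

Lemma sqr_vnorm x : vnorm x ^+ 2 = dotv x x.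
Proof. by rewrite vnormE sqr_sqrtr // dotv_ge0. Qed.

Lemma vnorm_eq0 x : (vnorm x == 0) = (x == 0).
Proof. by rewrite vnormE sqrtr_eq0 le_eqVlt ltNge dotv_ge0 orbF dotv_eq0. Qed.

Lemma vnorm0 : vnorm (0 : 'cV[R]_k) = 0.
Proof. by apply/eqP; rewrite vnorm_eq0. Qed.

Lemma dotv_le_vnorm x y : dotv x y <= vnorm x * vnorm y.
Proof.
apply: le_trans (ler_norm _) _; apply: le_of_sqr_le.
  by rewrite mulr_ge0 // vnorm_ge0.
by rewrite real_normK ?num_real // exprMn !sqr_vnorm dotv_Cauchy_Schwarz.
Qed.

Lemma vnormD x y : vnorm (x + y) <= vnorm x + vnorm y.
Proof.
apply: le_of_sqr_le; first by rewrite addr_ge0 // vnorm_ge0.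
rewrite sqr_vnorm dotvDl !dotvDr sqrrD !sqr_vnorm (dotvC y x).
have := dotv_le_vnorm x y; lra.
Qed.

Lemma vnormZ (c : R) x : vnorm (c *: x) = `|c| * vnorm x.
Proof.
by rewrite !vnormE dotvZl dotvZr mulrA sqrtrM -expr2 ?sqr_ge0 // sqrtr_sqr.
Qed.

Lemma vnormN x : vnorm (- x) = vnorm x.
Proof. by rewrite -scaleN1r vnormZ normrN normr1 mul1r. Qed.

Lemma coord_le_vnorm x j : `|x j 0| <= vnorm x.
Proof.
apply: le_of_sqr_le; first exact: vnorm_ge0.
by rewrite real_normK ?num_real // sqr_vnorm sqr_coord_le_dotv.
Qed.

Lemma dotv_le_sqr x (e : R) : vnorm x <= e -> dotv x x <= e ^+ 2.
Proof. by move=> xe; rewrite -sqr_vnorm; have := vnorm_ge0 x; nra. Qed.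

Lemma dotv_normalize x :
  x != 0 -> dotv ((vnorm x)^-1 *: x) ((vnorm x)^-1 *: x) = 1.
Proof.
rewrite -vnorm_eq0 => x0.
by rewrite dotvZl dotvZr mulrA -expr2 -sqr_vnorm exprVn mulVf // expf_neq0.
Qed.

End EuclideanNorm.

Section EntrywiseContinuity.
Variables (R : realType) (k : nat).

Lemma continuous_sum (l : nat) (F : 'I_l -> 'rV[R]_k -> R) :
  (forall i, continuous (F i)) -> continuous (fun v => \sum_(i < l) F i v).
Proof.
elim: l F => [|l IHl] F Fc.
  by under eq_fun do rewrite big_ord0; exact: cst_continuous.
under eq_fun do rewrite big_ord_recr /=.
by move=> v; apply: continuousD; [exact: IHl|exact: Fc].
Qed.

Definition entrywise_continuous (l : nat) (X : 'rV[R]_k -> 'cV[R]_l) :=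
  forall i, continuous (fun v => X v i 0).

Lemma entrywise_continuous_tr : entrywise_continuous (fun v : 'rV[R]_k => v^T).
Proof. by move=> i; under eq_fun do rewrite mxE; exact: coord_continuous. Qed.

Lemma entrywise_continuous_cst (l : nat) (c : 'cV[R]_l) :
  entrywise_continuous (fun _ => c).
Proof. by move=> i; exact: cst_continuous. Qed.

Lemma entrywise_continuousD (l : nat) (X Y : 'rV[R]_k -> 'cV[R]_l) :
  entrywise_continuous X -> entrywise_continuous Y ->
  entrywise_continuous (fun v => X v + Y v).
Proof.
move=> Xc Yc i; under eq_fun do rewrite mxE.
by move=> v; apply: continuousD; [exact: Xc|exact: Yc].
Qed.

Lemma entrywise_continuous_mulmx (l p : nat) (B : 'M[R]_(p, l))
    (X : 'rV[R]_k -> 'cV[R]_l) :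
  entrywise_continuous X -> entrywise_continuous (fun v => B *m X v).
Proof.
move=> Xc i; under eq_fun do rewrite mxE.
apply: continuous_sum => j v; apply: continuousM; [exact: cst_continuous|exact: Xc].
Qed.

Lemma continuous_dotv (l : nat) (X Y : 'rV[R]_k -> 'cV[R]_l) :
  entrywise_continuous X -> entrywise_continuous Y ->
  continuous (fun v => dotv (X v) (Y v)).
Proof.
move=> Xc Yc; apply: continuous_sum => j v.
by apply: continuousM; [exact: Xc|exact: Yc].
Qed.

Lemma continuous_vnorm (l : nat) (X : 'rV[R]_k -> 'cV[R]_l) :
  entrywise_continuous X -> continuous (fun v => vnorm (X v)).
Proof.
move=> Xc; under eq_fun do rewrite vnormE.
move=> v; apply: continuous_comp; last exact: sqrt_continuous.
exact: continuous_dotv.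
Qed.

End EntrywiseContinuity.

(* Compactness is only available for row vectors, hence the transposes. *)
Lemma EVT_min_cV (R : realType) (k : nat) (G : 'cV[R]_k -> R)
    (S : set 'cV[R]_k) (r : R) :
  S !=set0 -> closed [set v : 'rV[R]_k | S v^T] ->
  (forall x, S x -> vnorm x <= r) -> continuous (fun v : 'rV[R]_k => G v^T) ->
  exists2 xs, S xs & forall x, S x -> G xs <= G x.
Proof.
move=> [x0 Sx0] Sclosed Sbounded Gc.
set box := [set v : 'rV[R]_k | forall i, `[- r, r]%classic (v ord0 i)].
have box_compact : compact box.
  by apply: (@rV_compact _ _ (fun=> `[- r, r]%classic)) => i;
    exact: segment_compact.
have S_box : [set v : 'rV[R]_k | S v^T] `<=` box.
  move=> v /Sbounded vr i /=; rewrite in_itv /= -ler_norml.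
  by apply: le_trans vr; have := coord_le_vnorm v^T i; rewrite mxE.
have S0 : [set v : 'rV[R]_k | S v^T] !=set0 by exists x0^T; rewrite /= trmxK.
have [v Sv vmin] := compact_EVT_min S0
  (subclosed_compact Sclosed box_compact S_box) (continuous_subspaceT Gc).
exists v^T; first by move: Sv; rewrite inE.
by move=> x Sx; have := vmin x^T; rewrite trmxK inE /= trmxK; apply.
Qed.

Lemma EVT_min_ball (R : realType) (k : nat) (G : 'cV[R]_k -> R)
    (c : 'cV[R]_k) (r : R) :
  0 <= r -> continuous (fun v : 'rV[R]_k => G v^T) ->
  exists2 xs, vnorm (xs - c) <= r & forall x, vnorm (x - c) <= r -> G xs <= G x.
Proof.
move=> r0 Gc; apply: (@EVT_min_cV _ _ G _ (vnorm c + r)) => //.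
- by exists c; rewrite /= subrr vnorm0.
- apply: (@preimage_closed _ _ (fun v : 'rV[R]_k => vnorm (v^T - c))
    [set x | x <= r]); last exact: closed_le.
  move=> v _; apply: continuous_vnorm.
  by apply: entrywise_continuousD; [exact: entrywise_continuous_tr|
    exact: entrywise_continuous_cst].
- move=> x xc; have := vnormD (x - c) c; rewrite subrK; lra.
Qed.

(** * Extremal eigenvalues as Rayleigh quotients *)

Section ExtremalEigenvalues.
Variables (R : realType) (k : nat).
Implicit Types (M P : 'M[R]_k) (x v : 'cV[R]_k).

Lemma eigenvalue_symP M a : M^T = M ->
  reflect (exists2 v : 'cV[R]_k, M *m v = a *: v & v != 0) (eigenvalue M a).
Proof.
move=> Msym; apply: (iffP eigenvalueP) => -[v vM v0]; exists v^T.
- by rewrite -Msym -trmx_mul vM linearZ.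
- by rewrite trmx_eq0.
- by rewrite -[M]Msym -trmx_mul vM linearZ.
- by rewrite trmx_eq0.
Qed.

Lemma eigenvalueN M a : eigenvalue (- M) (- a) = eigenvalue M a.
Proof.
apply/eigenvalueP/eigenvalueP => -[v vM v0]; exists v => //.
  by apply: oppr_inj; rewrite -mulmxN vM scaleNr.
by rewrite mulmxN vM scaleNr.
Qed.

(* A positive semidefinite form vanishing at [v] kills [v]: expand the form
   at [v + t P v] for a suitable negative [t]. *)
Lemma psd_form_eq0 P v : P^T = P -> (forall x, 0 <= dotv x (P *m x)) ->
  dotv v (P *m v) = 0 -> P *m v = 0.
Proof.
move=> Psym Ppsd Pv; set w := P *m v.
apply/eqP; rewrite -dotv_eq0; set N := dotv w w; set c := dotv w (P *m w).
have c0 : 0 <= c := Ppsd w.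
have N0 : 0 <= N := dotv_ge0 w.
have form_t t : 0 <= 2 * t * N + t ^+ 2 * c.
  have := Ppsd (v + t *: w).
  rewrite mulmxDr -scalemxAr !dotvDl !dotvDr !dotvZl !dotvZr Pv.
  by rewrite (dotv_mulmx_sym _ _ Psym) -/w -/N -/c; congr (_ <= _); ring.
have := form_t (- N / (c + 1)); set t := - N / (c + 1) => tN.
have tc : t * (c + 1) = - N by rewrite /t mulfVK // gt_eqF // ltr_wpDl.
by rewrite eq_le N0 andbT; nra.
Qed.

Lemma quadratic_form_min_sphere M : (0 < k)%N ->
  exists2 vc, dotv vc vc = 1 &
    forall x, dotv x x = 1 -> dotv vc (M *m vc) <= dotv x (M *m x).
Proof.
move=> k0.
apply: (@EVT_min_cV _ _ (fun x => dotv x (M *m x)) [set x | dotv x x = 1] 1).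
- pose e : 'cV[R]_k := const_mx 1.
  have e0 : e != 0 by apply/eqP => /matrixP/(_ (Ordinal k0) 0); rewrite !mxE;
    apply/eqP; exact: oner_neq0.
  by exists ((vnorm e)^-1 *: e); exact: dotv_normalize.
- apply: (@preimage_closed _ _ (fun v : 'rV[R]_k => dotv v^T v^T)
    [set x | x = 1]); last exact: closed_eq.
  by move=> v _; apply: continuous_dotv; exact: entrywise_continuous_tr.
- by move=> x /= x1; rewrite vnormE x1 sqrtr1.
- apply: continuous_dotv; first exact: entrywise_continuous_tr.
  by apply: entrywise_continuous_mulmx; exact: entrywise_continuous_tr.
Qed.

Lemma rayleigh_min M : (0 < k)%N -> M^T = M ->
  exists lam, eigenvalue M lam /\ forall x, lam * dotv x x <= dotv x (M *m x).
Proof.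
move=> k0 Msym; have [vc vc1 vc_min] := quadratic_form_min_sphere M k0.
set lam := dotv vc (M *m vc).
have lam_min x : lam * dotv x x <= dotv x (M *m x).
  have [->|x0] := eqVneq x 0; first by rewrite !dotv0l mulr0.
  have xx_gt0 : 0 < dotv x x by rewrite dotv_gt0.
  have := vc_min _ (dotv_normalize x0).
  rewrite -scalemxAr dotvZl dotvZr -/lam mulrA -expr2 exprVn sqr_vnorm.
  by rewrite ler_pdivlMl // mulrC.
exists lam; split => //; apply/eigenvalue_symP => //; exists vc; last first.
  by apply/eqP => vc0; move: vc1; rewrite /= vc0 dotv0l => /eqP; rewrite eq_sym oner_eq0.
apply/eqP; rewrite -subr_eq0 -mul_scalar_mx -mulmxBl; apply/eqP.
apply: psd_form_eq0.
- by rewrite linearB /= Msym tr_scalar_mx.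
- by move=> x; rewrite mulmxBl mul_scalar_mx dotvBr dotvZr subr_ge0.
- by rewrite mulmxBl mul_scalar_mx dotvBr dotvZr vc1 mulr1 subrr.
Qed.

Lemma eigenvalue_ge M (lam a : R) : M^T = M ->
  (forall x, lam * dotv x x <= dotv x (M *m x)) -> eigenvalue M a -> lam <= a.
Proof.
move=> Msym lam_le /(eigenvalue_symP _ Msym) [v vM v0].
by have := lam_le v; rewrite vM dotvZr ler_pM2r // dotv_gt0.
Qed.

Lemma lambda_min_le M : (0 < k)%N -> M^T = M ->
  forall x, lambda_min M * dotv x x <= dotv x (M *m x).
Proof.
move=> k0 Msym; have [lam [lamM lam_le]] := rayleigh_min k0 Msym.
suff -> : lambda_min M = lam by [].
have lam_lb : lbound [set a | eigenvalue M a] lam.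
  by move=> a; exact: eigenvalue_ge.
apply/le_anti/andP; split; first by apply: ge_inf; first exists lam.
by apply: lb_le_inf; first exists lam.
Qed.

Lemma lambda_max_ge M : (0 < k)%N -> M^T = M ->
  forall x, dotv x (M *m x) <= lambda_max M * dotv x x.
Proof.
move=> k0 Msym; have MNsym : (- M)^T = - M by rewrite linearN /= Msym.
have [lam [lamM lam_le]] := rayleigh_min k0 MNsym.
suff -> : lambda_max M = - lam.
  by move=> x; have := lam_le x; rewrite mulNmx dotvNr; lra.
rewrite -eigenvalueN opprK in lamM.
have lam_ub : ubound [set a | eigenvalue M a] (- lam).
  move=> a aM; rewrite lerNr; apply: eigenvalue_ge MNsym lam_le _.
  by rewrite eigenvalueN.
apply/le_anti/andP; split; first by apply: ge_sup; first exists (- lam).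
by apply: ub_le_sup; first exists (- lam).
Qed.

End ExtremalEigenvalues.

Lemma sigma_min_le (R : realType) (n m : nat) (A : 'M[R]_(n, m)) (y : 'cV[R]_m) :
  (0 < m)%N -> sigma_min A * vnorm y <= vnorm (A *m y).
Proof.
move=> m0; rewrite /sigma_min; set lam := lambda_min _.
have [lam_le0|lam_gt0] := leP lam 0.
  by rewrite ler0_sqrtr // mul0r vnorm_ge0.
apply: le_of_sqr_le; first exact: vnorm_ge0.
rewrite exprMn (sqr_sqrtr (ltW lam_gt0)) !sqr_vnorm dotv_mulmx dotvC mulmxA.
by apply: lambda_min_le => //; rewrite trmx_mul trmxK.
Qed.

(* Minimal-norm solution [d = J^T (J J^T)^-1 r]. *)
Lemma solvable_of_tr_vnorm_ge (R : realType) (n m : nat) (J : 'M[R]_(m, n))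
    (mu : R) :
  0 < mu -> (forall y : 'cV[R]_m, mu * vnorm y <= vnorm (J^T *m y)) ->
  forall r : 'cV[R]_m, exists d : 'cV[R]_n, J *m d = r /\ mu * vnorm d <= vnorm r.
Proof.
move=> mu0 J_ge r; set N := J *m J^T.
have N_form z : dotv z (N *m z) = dotv (J^T *m z) (J^T *m z).
  by rewrite -mulmxA dotv_mulmx.
have Nunit : N \in unitmx.
  rewrite -row_free_unit; apply: inj_row_free => v vN.
  have Nsym : N^T = N by rewrite trmx_mul trmxK.
  have Nv : N *m v^T = 0 by rewrite -Nsym -trmx_mul vN trmx0.
  have JTv : J^T *m v^T = 0 by apply/eqP; rewrite -dotv_eq0 -N_form Nv dotv0r.
  have := J_ge v^T; rewrite JTv vnorm0 pmulr_rle0 // => vle0.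
  by apply/eqP; rewrite -trmx_eq0 -vnorm_eq0 eq_le vle0 vnorm_ge0.
set z := invmx N *m r; exists (J^T *m z); split.
  by rewrite mulmxA -/N mulmxA mulmxV // mul1mx.
have dz : vnorm (J^T *m z) ^+ 2 <= vnorm z * vnorm r.
  by rewrite sqr_vnorm -N_form mulmxA mulmxV // mul1mx dotv_le_vnorm.
have := J_ge z; have := vnorm_ge0 z; have := vnorm_ge0 r.
have := vnorm_ge0 (J^T *m z); move: dz.
set D := vnorm _; set Z := vnorm z; set Rr := vnorm r => dz D0 R0 Z0 ZD.
rewrite leNgt; apply/negP => RD.
have D_gt0 : 0 < D by nra.
have : D * Rr < D * (mu * D) by rewrite ltr_pM2l.
have : mu * D ^+ 2 <= mu * (Z * Rr) by apply: ler_wpM2l; first exact: ltW.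
have : Rr * (mu * Z) <= Rr * D by apply: ler_wpM2l.
nra.
Qed.

Lemma exists_small_step (R : realFieldType) (a1 a2 c1 c2 : R) :
  0 < a1 -> 0 < a2 -> 0 <= c1 -> 0 <= c2 ->
  exists tau, [/\ 0 < tau, tau <= 1, tau * c1 < a1 & tau * c2 < a2].
Proof.
move=> a10 a20 c10 c20.
exists (Num.min 1 (Num.min (a1 / (c1 + 1)) (a2 / (c2 + 1)))).
have tau_le (a c : R) t : 0 < a -> 0 <= c -> t <= a / (c + 1) -> t * c < a.
  move=> a0 c0 ta; have c1_0 : 0 < c + 1 by lra.
  rewrite ler_pdivlMr // in ta; nra.
split; rewrite ?lt_min ?ge_min ?lexx //.
- by rewrite ltr01 !divr_gt0 // ltr_wpDl.
- by apply: tau_le; rewrite // ge_min ge_min lexx !orbT.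
- by apply: tau_le; rewrite // ge_min ge_min lexx !orbT.
Qed.

(** * The quadratic map *)

Section QuadraticMap.
Variables (R : realType) (n m : nat).
Variables (Ai : 'I_m -> 'M[R]_n) (ai : 'I_m -> 'cV[R]_n).
Hypothesis Ai_sym : forall i, (Ai i)^T = Ai i.
Implicit Types (x h : 'cV[R]_n) (y : 'cV[R]_m).

Definition quadmap_jac x : 'M[R]_(m, n) := \matrix_(i, j) (Ai i *m x + ai i) j 0.

Definition quadmap_quad h : 'cV[R]_m := \col_i (2^-1 * dotv h (Ai i *m h)).

Lemma quadmapE x i : quadmap Ai ai x i 0 = 2^-1 * dotv x (Ai i *m x) + dotv (ai i) x.
Proof. by rewrite mxE !dotvE mulmxA. Qed.

Lemma quadmap_jacE x h i : (quadmap_jac x *m h) i 0 = dotv (Ai i *m x + ai i) h.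
Proof. by rewrite mxE; apply: eq_bigr => j _; rewrite mxE. Qed.

Lemma quadmapD x h :
  quadmap Ai ai (x + h) = quadmap Ai ai x + quadmap_jac x *m h + quadmap_quad h.
Proof.
apply/matrixP => i j; rewrite (ord1 j).
have -> (A B C : 'cV[R]_m) : (A + B + C) i 0 = A i 0 + B i 0 + C i 0.
  by rewrite !mxE.
rewrite !quadmapE quadmap_jacE mxE mulmxDr !dotvDl !dotvDr (dotv_mulmx_sym x h (Ai_sym i)).
by rewrite (dotvC h (Ai i *m x)); field.
Qed.

Lemma quadmap_quadZ (c : R) h : quadmap_quad (c *: h) = c ^+ 2 *: quadmap_quad h.
Proof. by apply/matrixP => i j; rewrite !mxE -scalemxAr dotvZl dotvZr; ring. Qed.

Lemma quadmap_convex_comb (t : R) x1 x2 :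
  quadmap Ai ai (t *: x1 + (1 - t) *: x2) -
    (t *: quadmap Ai ai x1 + (1 - t) *: quadmap Ai ai x2) =
  - ((t * (1 - t)) *: quadmap_quad (x1 - x2)).
Proof.
set x0 := t *: x1 + (1 - t) *: x2; set h := x1 - x2.
have f1 : quadmap Ai ai x1 =
    quadmap Ai ai x0 + quadmap_jac x0 *m ((1 - t) *: h) + quadmap_quad ((1 - t) *: h).
  by rewrite -quadmapD; congr quadmap; apply/matrixP => i j; rewrite !mxE; ring.
have f2 : quadmap Ai ai x2 =
    quadmap Ai ai x0 + quadmap_jac x0 *m ((- t) *: h) + quadmap_quad ((- t) *: h).
  by rewrite -quadmapD; congr quadmap; apply/matrixP => i j; rewrite !mxE; ring.
rewrite f1 f2 !quadmap_quadZ -!scalemxAr.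
set F := quadmap Ai ai x0; set Jh := quadmap_jac x0 *m h; set Q := quadmap_quad h.
by apply/matrixP => i j; rewrite !mxE; ring.
Qed.

Lemma tr_quadmap_jac x y :
  (quadmap_jac x)^T *m y = colmat ai *m y + \sum_i y i 0 *: (Ai i *m x).
Proof.
apply/matrixP => k j; rewrite (ord1 j) !mxE summxE -big_split /=.
by apply: eq_bigr => i _; rewrite !mxE; ring.
Qed.

Lemma entrywise_continuous_quadmap :
  entrywise_continuous (fun v : 'rV[R]_n => quadmap Ai ai v^T).
Proof.
move=> i.
have -> : (fun v : 'rV[R]_n => quadmap Ai ai v^T i 0) =
    (fun v => dotv v^T ((2^-1 *: Ai i) *m v^T + ai i)).
  by apply: funext => v; rewrite quadmapE dotvDr -scalemxAl dotvZr (dotvC v^T (ai i)).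
apply: continuous_dotv; first exact: entrywise_continuous_tr.
apply: entrywise_continuousD; last exact: entrywise_continuous_cst.
by apply: entrywise_continuous_mulmx; exact: entrywise_continuous_tr.
Qed.

Let Lsq := lambda_max (\sum_(i < m) ((Ai i)^T *m Ai i)).
Hypothesis n_gt0 : (0 < n)%N.
Hypothesis Lsq_ge0 : 0 <= Lsq.

Lemma sum_dotv_mulmx_le x :
  \sum_i dotv (Ai i *m x) (Ai i *m x) <= Lsq * dotv x x.
Proof.
rewrite [X in X <= _](_ : _ = dotv x ((\sum_i (Ai i)^T *m Ai i) *m x)).
  apply: lambda_max_ge => //; rewrite linear_sum /=.
  by apply: eq_bigr => i _; rewrite trmx_mul trmxK.
rewrite mulmx_suml dotv_suml; apply: eq_bigr => i _.
by rewrite -mulmxA dotv_mulmx dotvC.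
Qed.

Lemma vnorm_quadmap_quad_le h :
  vnorm (quadmap_quad h) <= Num.sqrt Lsq / 2 * dotv h h.
Proof.
apply: le_of_sqr_le; first by rewrite mulr_ge0 ?divr_ge0 ?sqrtr_ge0 ?dotv_ge0.
rewrite sqr_vnorm exprMn expr_div_n sqr_sqrtr //.
apply: (@le_trans _ _ (\sum_i 4^-1 * (dotv h h * dotv (Ai i *m h) (Ai i *m h)))).
  apply: ler_sum => i _; rewrite !mxE.
  have := dotv_Cauchy_Schwarz h (Ai i *m h); lra.
rewrite -mulr_sumr -mulr_sumr.
have := sum_dotv_mulmx_le h; have := dotv_ge0 h; nra.
Qed.

Lemma vnorm_sum_scale_le x y :
  vnorm (\sum_i y i 0 *: (Ai i *m x)) <= Num.sqrt Lsq * vnorm x * vnorm y.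
Proof.
set B := \sum_i _; set z := \col_i dotv x (Ai i *m B).
have BB : dotv B B = dotv y z.
  rewrite {1}/B dotv_suml /dotv; apply: eq_bigr => i _.
  by rewrite -/(dotv _ _) dotvZr mxE (dotv_mulmx_sym _ _ (Ai_sym i)) mulrC.
have z_le : vnorm z <= Num.sqrt Lsq * vnorm B * vnorm x.
  apply: le_of_sqr_le; first by rewrite !mulr_ge0 ?sqrtr_ge0 ?vnorm_ge0.
  rewrite sqr_vnorm !exprMn sqr_sqrtr // !sqr_vnorm.
  apply: (@le_trans _ _ (dotv x x * \sum_i dotv (Ai i *m B) (Ai i *m B))).
    by rewrite mulr_sumr; apply: ler_sum => i _; rewrite !mxE -expr2 dotv_Cauchy_Schwarz.
  have := sum_dotv_mulmx_le B; have := dotv_ge0 x; nra.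
apply: le_of_sqr_le_mul; rewrite ?mulr_ge0 ?sqrtr_ge0 ?vnorm_ge0 //.
rewrite sqr_vnorm BB; apply: le_trans (dotv_le_vnorm y z) _.
have := vnorm_ge0 y; have := vnorm_ge0 z; nra.
Qed.

Hypothesis m_gt0 : (0 < m)%N.

Lemma tr_quadmap_jac_vnorm_ge x y :
  (sigma_min (colmat ai) - Num.sqrt Lsq * vnorm x) * vnorm y <=
  vnorm ((quadmap_jac x)^T *m y).
Proof.
have Ay := sigma_min_le (colmat ai) y m_gt0.
have By := vnorm_sum_scale_le x y.
rewrite tr_quadmap_jac; set A := colmat ai *m y; set B := \sum_i _.
have := vnormD (A + B) (- B); rewrite addrK vnormN; lra.
Qed.

End QuadraticMap.

(** * Convexity of the image of a small ball *)

Section ConvexImage.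
Variables (R : realType) (n m : nat).
Variables (Ai : 'I_m -> 'M[R]_n) (ai : 'I_m -> 'cV[R]_n).
Hypothesis Ai_sym : forall i, (Ai i)^T = Ai i.
Implicit Types x xs : 'cV[R]_n.
Variables (L nu eps : R) (a : 'cV[R]_n).
Hypothesis L_gt0 : 0 < L.
Hypothesis eps_gt0 : 0 < eps.
Hypothesis a_small : L * (vnorm a + 2 * eps) < nu.
Hypothesis quad_le : forall h, vnorm (quadmap_quad Ai h) <= L / 2 * dotv h h.
Hypothesis jac_solvable : forall x (r : 'cV[R]_m), 0 < nu - L * vnorm x ->
  exists d, quadmap_jac Ai ai x *m d = r /\ (nu - L * vnorm x) * vnorm d <= vnorm r.

Section Penalty.
Variables (y : 'cV[R]_m) (x0 : 'cV[R]_n).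

(* Ekeland-type penalization of the distance to the centre [x0]. *)
Definition penalty x := vnorm (quadmap Ai ai x - y) + L * eps * vnorm (x - x0).

Lemma continuous_penalty : continuous (fun v : 'rV[R]_n => penalty v^T).
Proof.
have X_c : entrywise_continuous (fun v : 'rV[R]_n => quadmap Ai ai v^T - y).
  apply: entrywise_continuousD; last exact: entrywise_continuous_cst.
  exact: entrywise_continuous_quadmap.
have Y_c : entrywise_continuous (fun v : 'rV[R]_n => v^T - x0).
  apply: entrywise_continuousD; last exact: entrywise_continuous_cst.
  exact: entrywise_continuous_tr.
move=> v; apply: (@continuousD _ _ _ (fun v : 'rV[R]_n => vnorm (quadmap Ai ai v^T - y))
  (fun v => L * eps * vnorm (v^T - x0))); first exact: continuous_vnorm.
apply: (@continuousM _ _ (fun=> L * eps) (fun v => vnorm (v^T - x0))).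
  exact: cst_continuous.
exact: continuous_vnorm.
Qed.

Lemma penalty_step xs d (tau : R) :
  quadmap_jac Ai ai xs *m d = - (quadmap Ai ai xs - y) -> 0 <= tau -> tau <= 1 ->
  penalty (xs + tau *: d) <= penalty xs
    - tau * (vnorm (quadmap Ai ai xs - y) - L * eps * vnorm d)
    + tau ^+ 2 * (L / 2 * dotv d d).
Proof.
move=> Jd tau_ge0 tau_le1.
have fx' : quadmap Ai ai (xs + tau *: d) - y =
    (1 - tau) *: (quadmap Ai ai xs - y) + tau ^+ 2 *: quadmap_quad Ai d.
  rewrite quadmapD // -scalemxAr Jd quadmap_quadZ.
  set F := quadmap Ai ai xs; set Q := quadmap_quad Ai d.
  by apply/matrixP => i j; rewrite !mxE; ring.
have fx'_le : vnorm (quadmap Ai ai (xs + tau *: d) - y) <=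
    (1 - tau) * vnorm (quadmap Ai ai xs - y) + tau ^+ 2 * (L / 2 * dotv d d).
  rewrite fx'; apply: le_trans (vnormD _ _) _.
  rewrite !vnormZ ger0_norm ?subr_ge0 // ger0_norm ?sqr_ge0 //.
  by apply: lerD => //; apply: ler_wpM2l; [exact: sqr_ge0|exact: quad_le].
have x'_x0 : vnorm (xs + tau *: d - x0) <= vnorm (xs - x0) + tau * vnorm d.
  by rewrite addrAC; apply: le_trans (vnormD _ _) _; rewrite vnormZ ger0_norm.
have : L * eps * vnorm (xs + tau *: d - x0) <=
    L * eps * (vnorm (xs - x0) + tau * vnorm d).
  by apply: ler_wpM2l => //; rewrite mulr_ge0 ?ltW.
rewrite /penalty; nra.
Qed.

Lemma penalty_min_root xs :
  vnorm (xs - a) <= eps -> vnorm (xs - x0) <= eps / 2 ->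
  (forall x, vnorm (x - x0) <= eps -> penalty xs <= penalty x) ->
  quadmap Ai ai xs = y.
Proof.
move=> xs_a xs_x0 xs_min; apply/eqP; rewrite -subr_eq0 -vnorm_eq0.
rewrite eq_le vnorm_ge0 andbT leNgt; apply/negP => r_gt0.
set r := vnorm _ in r_gt0; set mu := nu - L * vnorm xs.
have xs_le : vnorm xs <= vnorm a + eps.
  by have := vnormD (xs - a) a; rewrite subrK; lra.
have mu_gt : L * eps < mu.
  by rewrite /mu; have := ler_wpM2l (ltW L_gt0) xs_le; have := a_small; lra.
have [d [Jd d_le]] := @jac_solvable xs (- (quadmap Ai ai xs - y))
  (lt_trans (mulr_gt0 L_gt0 eps_gt0) mu_gt).
rewrite vnormN -/mu -/r in d_le.
have d_ge0 := vnorm_ge0 d.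
have slack : 0 < r - L * eps * vnorm d.
  have : L * eps * vnorm d <= mu * vnorm d by apply: ler_wpM2r => //; exact: ltW.
  have := mulr_gt0 L_gt0 eps_gt0; nra.
have C_ge0 : 0 <= L / 2 * dotv d d by rewrite mulr_ge0 ?dotv_ge0 ?divr_ge0 ?ltW.
have eps2_gt0 : 0 < eps / 2 by rewrite divr_gt0.
have [tau [tau_gt0 tau_le1 tau_d tau_C]] :=
  exists_small_step eps2_gt0 slack d_ge0 C_ge0.
have x'_x0 : vnorm (xs + tau *: d - x0) <= eps.
  rewrite addrAC; apply: le_trans (vnormD _ _) _.
  by rewrite vnormZ ger0_norm ?ltW //; lra.
have := xs_min _ x'_x0; have := penalty_step Jd (ltW tau_gt0) tau_le1.
rewrite -/r; nra.
Qed.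

Lemma penalty_min_near (U : R) xs :
  0 <= U -> dotv (x0 - a) (x0 - a) <= eps ^+ 2 - U ->
  vnorm (quadmap Ai ai x0 - y) <= L / 2 * U ->
  (forall x, vnorm (x - x0) <= eps -> penalty xs <= penalty x) ->
  vnorm (xs - x0) <= eps / 2 /\ vnorm (xs - a) <= eps.
Proof.
move=> U_ge0 x0_a fx0 xs_min.
set q := vnorm (xs - x0); set p := vnorm (x0 - a).
have q_ge0 : 0 <= q := vnorm_ge0 _.
have p_ge0 : 0 <= p := vnorm_ge0 _.
have q_le : 2 * eps * q <= U.
  have := xs_min x0; rewrite /penalty subrr vnorm0 mulr0 addr0 => /(_ (ltW eps_gt0)).
  have := vnorm_ge0 (quadmap Ai ai xs - y); rewrite -/q => ? ?.
  have : L * (2 * eps * q) <= L * U.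
    have -> : L * (2 * eps * q) = 2 * (L * eps * q) by ring.
    have -> : L * U = 2 * (L / 2 * U) by field.
    lra.
  by rewrite ler_pM2l.
rewrite -sqr_vnorm -/p in x0_a.
have q_half : q <= eps / 2 by rewrite ler_pdivlMr //; have := eps_gt0; nra.
have p_le : p <= eps - q by apply: le_of_sqr_le; have := eps_gt0; nra.
split=> //; rewrite -(subrK x0 xs) -addrA.
by apply: le_trans (vnormD _ _) _; rewrite -/q -/p; lra.
Qed.

End Penalty.

Lemma quadmap_convex_comb_mem (t : R) x1 x2 :
  0 <= t -> t <= 1 -> vnorm (x1 - a) <= eps -> vnorm (x2 - a) <= eps ->
  exists2 x, vnorm (x - a) <= eps &
    quadmap Ai ai x = t *: quadmap Ai ai x1 + (1 - t) *: quadmap Ai ai x2.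
Proof.
move=> t_ge0 t_le1 x1_a x2_a.
set y := _ + _; set x0 := t *: x1 + (1 - t) *: x2.
have s_ge0 : 0 <= t * (1 - t) by rewrite mulr_ge0 ?subr_ge0.
set U := t * (1 - t) * dotv (x1 - x2) (x1 - x2).
have U_ge0 : 0 <= U by rewrite mulr_ge0 ?dotv_ge0.
have x0_a : dotv (x0 - a) (x0 - a) <= eps ^+ 2 - U.
  have -> : x0 - a = t *: (x1 - a) + (1 - t) *: (x2 - a).
    by apply/matrixP => i j; rewrite !mxE; ring.
  have -> : U = t * (1 - t) * dotv ((x1 - a) - (x2 - a)) ((x1 - a) - (x2 - a)).
    by rewrite opprB addrA subrK.
  rewrite dotv_convex_comb.
  have := dotv_le_sqr x1_a; have := dotv_le_sqr x2_a; nra.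
have fx0 : vnorm (quadmap Ai ai x0 - y) <= L / 2 * U.
  rewrite quadmap_convex_comb // vnormN vnormZ ger0_norm // /U mulrCA.
  by apply: ler_wpM2l.
have [xs xs_x0 xs_min] :=
  EVT_min_ball x0 (ltW eps_gt0) (@continuous_penalty y x0).
have [xs_x0' xs_a] := penalty_min_near U_ge0 x0_a fx0 xs_min.
by exists xs => //; exact: penalty_min_root xs_a xs_x0' xs_min.
Qed.

End ConvexImage.

Unset Implicit Arguments.

Theorem theorem3 (R : realType) (n m : nat) (hn : (1 <= n)%N) (hm : (1 <= m)%N)
  (Ai : 'I_m -> 'M[R]_n) (ai : 'I_m -> 'cV[R]_n)
  (hsym : forall i, (Ai i)^T = Ai i)
  (hL : 0 < Num.sqrt (lambda_max (\sum_(i < m) ((Ai i)^T *m Ai i)))) :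
  let Lnew := Num.sqrt (lambda_max (\sum_(i < m) ((Ai i)^T *m Ai i))) in
  let nu := sigma_min (colmat ai) in
  let epsstar := nu / (2 * Lnew) in
  forall (eps : R) (a : 'cV[R]_n),
    0 < eps -> eps < epsstar -> vnorm a < 2 * (epsstar - eps) ->
    convex_set (Fm Ai ai eps a : set (convex_lmodType 'cV[R]_m)).
Proof.
move=> Lnew nu epsstar eps a eps_gt0 eps_lt a_lt.
have Lsq_ge0 : 0 <= lambda_max (\sum_(i < m) ((Ai i)^T *m Ai i)).
  by apply: ltW; rewrite -sqrtr_gt0.
have a_small : Lnew * (vnorm a + 2 * eps) < nu.
  have -> : nu = Lnew * (2 * epsstar) by rewrite /epsstar; field; rewrite gt_eqF.
  by rewrite ltr_pM2l //; lra.
have jac_solvable x (r : 'cV[R]_m) : 0 < nu - Lnew * vnorm x ->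
    exists d, quadmap_jac Ai ai x *m d = r /\ (nu - Lnew * vnorm x) * vnorm d <= vnorm r.
  move=> mu_gt0; apply: solvable_of_tr_vnorm_ge => // y.
  exact: tr_quadmap_jac_vnorm_ge.
move=> _ _ t /[!inE] -[x1 x1_a <-] [x2 x2_a <-].
have [x x_a fx] := quadmap_convex_comb_mem hsym hL eps_gt0 a_small
  (vnorm_quadmap_quad_le hn Lsq_ge0) jac_solvable (ge0 t) (le1 t) x1_a x2_a.
by exists x.
Qed.
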